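(* Let $q(x_1,\ldots,x_m)=(q_1(x_1),\ldots,q_m(x_m))$ with each $q_i(x_i)\in\mathbb{R}$, where each input component $x_i$ lies in a metric space with metric $d$. Define the distance between inputs $x=(x_1,\ldots,x_m)$ and $x'=(x'_1,\ldots,x'_m)$ as $d(x,x')=\|(d(x_1,x'_1),\ldots,d(x_m,x'_m))\|_p$ for some $p\in[1,\infty]$. For each $i$ let $\tilde q_i$ be an $\epsilon_i$-differentially private mechanism for $q_i$, the mechanisms using independent randomness. Then the mechanism $\tilde q=(\tilde q_1,\ldots,\tilde q_m)$ is $\|(\epsilon_1,\ldots,\epsilon_m)\|_{p^*}$-differentially private with respect to $d$, where $\ell_{p^*}$ is the dual norm of $\ell_p$ (i.e. $1/p+1/p^*=1$).
   Context: A randomized mechanism $M$ on a metric space with metric $d$ is $\epsilon$-differentially private ($\epsilon\ge0$) if for all inputs $x,x'$ with $d(x,x')\le D$ and every set $S$ of outputs, $\Pr[M(x)\in S]\le e^{D\epsilon}\Pr[M(x')\in S]$. For $\tilde q_i$ this is with respect to the metric $d$ on the $i$-th input component; for $\tilde q$ it is with respect to the $\ell_p$-combined distance above, with output sets $S\subseteq\mathbb{R}^m$. *)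

From HB Require Import structures.
From mathcomp Require Import all_boot all_order all_algebra.
From mathcomp Require Import all_classical all_reals all_analysis.
Set Implicit Arguments. Unset Strict Implicit. Unset Printing Implicit Defensive.
Import Order.TTheory GRing.Theory Num.Theory.
Local Open Scope classical_set_scope.
Local Open Scope ring_scope.

Section Defs.
Variable R : realType.

Definition is_metric (T : Type) (d : T -> T -> R) : Prop :=
  (forall x y, 0 <= d x y) /\ (forall x y, d x y = 0 <-> x = y) /\
  (forall x y, d x y = d y x) /\ (forall x y z, d x z <= d x y + d y z).

Definition lpnorm (m : nat) (p : \bar R) (v : 'I_m -> R) : R :=
  match p with
  | EFin r => (\sum_(i < m) `|v i| `^ r) `^ r^-1
  | _ => \big[Num.max/0]_(i < m) `|v i|
  end.

(* conjugate (dual) exponent p* with 1/p + 1/p* = 1 *)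
Definition conj_exp (p : \bar R) : \bar R :=
  match p with
  | EFin r => if r == 1 then +oo%E else (r / (r - 1))%:E
  | _ => 1%E
  end.

Definition lp_dist (T : Type) (d : T -> T -> R) (m : nat) (p : \bar R)
  (x x' : m.-tuple T) : R :=
  lpnorm p (fun i => d (tnth x i) (tnth x' i)).

(* eps-differential privacy of a randomized mechanism M : U -> Omega -> V
   (randomness drawn from the probability space (Omega, P)) w.r.t. dist *)
Definition diff_private (dO : measure_display) (Omega : measurableType dO)
  (P : probability Omega R) (U : Type) (dV : measure_display)
  (V : measurableType dV) (dist : U -> U -> R) (M : U -> Omega -> V)
  (eps : R) : Prop :=
  forall (x x' : U) (D : R), dist x x' <= D ->
  forall S : set V, measurable S ->
    (P (M x @^-1` S) <= (expR (D * eps))%:E * P (M x' @^-1` S))%E.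

Definition mutually_independent (dO : measure_display) (Omega : measurableType dO)
  (P : probability Omega R) (m : nat) (Y : 'I_m -> Omega -> R) : Prop :=
  forall B : 'I_m -> set R, (forall i, measurable (B i)) ->
    P (\bigcap_(i in [set: 'I_m]) (Y i @^-1` B i)) =
    (\prod_(i < m) P (Y i @^-1` B i))%E.

End Defs.

(* Fix inputs x and x' and write d_i for the distance between their i-th
   components.  By mutual independence, the law of the output tuple is the
   product of the laws of its components: splitting off the first coordinate,
   the first component is independent of the tuple of the others, because the
   product rule extends from boxes to all measurable sets of tuples by the
   pi-lambda theorem.  The law of the i-th component under x is bounded by
   exp(d_i eps_i) times its law under x', and such bounds multiply along
   product measures.  Finally, by Hoelder's inequality,
   sum_i d_i eps_i <= |d|_p |eps|_p* <= D |eps|_p*, where the finite-sum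
   Hoelder inequality is the one for the counting measure on nat. *)

From HB Require Import structures.
From mathcomp Require Import all_boot all_order all_algebra.
From mathcomp Require Import all_classical all_reals all_analysis.
From mathcomp Require Import ring.
Import Order.TTheory GRing.Theory Num.Theory.
Local Open Scope classical_set_scope.
Local Open Scope ring_scope.
Set Implicit Arguments. Unset Strict Implicit. Unset Printing Implicit Defensive.

Section finite_hoelder.
Context (R : realType).

Lemma nneseries_eventually0 m (f : nat -> \bar R) : (forall k, 0 <= f k)%E ->
  (forall k, (m <= k)%N -> f k = 0%E) -> (\sum_(k <oo) f k = \sum_(k < m) f k)%E.
Proof.
move=> f0 fm; rewrite (nneseries_split 0 m)// add0n eseries0 ?adde0 ?big_mkord//.
by move=> k mk _; exact: fm.
Qed.

Definition zero_ext m (v : 'I_m -> R) (k : nat) : R :=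
  if insub k is Some i then v i else 0.

Lemma Lnorm_counting_zero_ext m (v : 'I_m -> R) p : 0 < p ->
  ('N[counting]_p%:E[EFin \o zero_ext v] = ((\sum_i `|v i| `^ p) `^ p^-1)%:E)%E.
Proof.
move=> p0; rewrite Lnorm_counting// (@nneseries_eventually0 m).
- rewrite -poweR_EFin sumEFin; congr (_ `^ _)%E.
  by congr (_%:E); apply: eq_bigr => i _; rewrite /zero_ext valK.
- by move=> k; rewrite poweR_ge0.
- by move=> k mk /=; rewrite /zero_ext insubF ?ltnNge ?mk// normr0 powR0// gt_eqF.
Qed.

Lemma lpnorm_ge0 m p (v : 'I_m -> R) : 0 <= lpnorm p v.
Proof. by case: p => [r| |] /=; rewrite ?powR_ge0 ?bigmax_ge_id. Qed.

Lemma lpnorm1 m (v : 'I_m -> R) : lpnorm 1%:E v = \sum_i `|v i|.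
Proof.
rewrite /= invr1 powRr1; last by apply: sumr_ge0 => i _; exact: powR_ge0.
by apply: eq_bigr => i _; rewrite powRr1.
Qed.

Lemma hoelder_sum m (a b : 'I_m -> R) (p q : R) :
  0 < p -> 0 < q -> p^-1 + q^-1 = 1 ->
  \sum_i `|a i * b i| <=
    (\sum_i `|a i| `^ p) `^ p^-1 * (\sum_i `|b i| `^ q) `^ q^-1.
Proof.
move=> p0 q0 pq; rewrite -lee_fin EFinM -!Lnorm_counting_zero_ext//.
rewrite -lpnorm1 /= -Lnorm_counting_zero_ext//.
have -> : zero_ext (a \* b) = (zero_ext a \* zero_ext b)%R.
  by apply/funext => k; rewrite /zero_ext /=; case: insub => // *; rewrite mulr0.
exact: hoelder.
Qed.

Lemma hoelder_sum_bigmax m (a b : 'I_m -> R) :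
  \sum_i `|a i * b i| <= (\sum_i `|a i|) * \big[Num.max/0]_i `|b i|.
Proof.
rewrite mulr_suml; apply: ler_sum => i _; rewrite normrM ler_wpM2l //.
exact: le_bigmax.
Qed.

Lemma hoelder_lpnorm m (a b : 'I_m -> R) (p : \bar R) : (1 <= p)%E ->
  \sum_i `|a i * b i| <= lpnorm p a * lpnorm (conj_exp p) b.
Proof.
case: p => [r| |] // r1; rewrite /conj_exp.
- have [->|r_neq1] := eqVneq r 1.
    by rewrite lpnorm1; exact: hoelder_sum_bigmax.
  have r_gt1 : 1 < r by rewrite lt_neqAle eq_sym r_neq1 -lee_fin.
  apply: hoelder_sum.
  + exact: lt_trans r_gt1.
  + by rewrite divr_gt0 ?subr_gt0 // (lt_trans ltr01).
  + by field; rewrite subr_eq0 r_neq1 gt_eqF // (lt_trans ltr01).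
- under eq_bigr do rewrite mulrC; rewrite mulrC lpnorm1.
  exact: hoelder_sum_bigmax.
Qed.

End finite_hoelder.

Section product_measure_le.
Local Open Scope ereal_scope.
Context d1 d2 (T1 : measurableType d1) (T2 : measurableType d2) (R : realType).
Variables (mu1 nu1 : {measure set T1 -> \bar R}).
Variables (mu2 nu2 : {sigma_finite_measure set T2 -> \bar R}).

Lemma product_measure_le (a b : R) : (0 <= a)%R -> (0 <= b)%R ->
  (forall A, measurable A -> mu1 A <= a%:E * nu1 A) ->
  (forall B, measurable B -> mu2 B <= b%:E * nu2 B) ->
  forall S, measurable S -> (mu1 \x mu2) S <= (a * b)%:E * (nu1 \x nu2) S.
Proof.
move=> a0 b0 mu_nu1 mu_nu2 S mS.
have mnu2S := measurable_fun_xsection nu2 mS.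
apply: (@le_trans _ _ (\int[mu1]_x (b%:E * (nu2 \o xsection S) x))).
  apply: ge0_le_integral => //.
  - exact: measurable_fun_xsection.
  - exact: measurable_funeM.
  - by move=> x _; apply: mu_nu2; exact: measurable_xsection.
rewrite ge0_integralZl// EFinM (muleC a%:E) -muleA lee_wpmul2l//.
have mu_nu1' A : measurable A -> mu1 A <= mscale (NngNum a0) nu1 A by exact: mu_nu1.
apply: le_trans (ge0_le_measure_integral mu_nu1' _ _ mnu2S) _ => //.
by rewrite ge0_integral_mscale.
Qed.

End product_measure_le.

Section independent_pair.
Local Open Scope ereal_scope.
Context dO (Omega : measurableType dO) (R : realType) (P : probability Omega R).
Context d1 d2 (T1 : measurableType d1) (T2 : measurableType d2).
Variables (X : {mfun Omega >-> T1}) (Y : {mfun Omega >-> T2}).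

Lemma distribution_pair_independent :
  (forall A B, measurable A -> measurable B ->
    P (X @^-1` A `&` Y @^-1` B) = P (X @^-1` A) * P (Y @^-1` B)) ->
  forall S, measurable S ->
    P ((fun w => (X w, Y w)) @^-1` S) = (distribution P X \x distribution P Y) S.
Proof.
move=> XY_indep S mS.
have mXY : measurable_fun setT (fun w => (X w, Y w)) by exact: measurable_fun_pair.
by apply/esym/(@product_measure_unique _ _ _ _ _ _ _ (pushforward P _));
  [exact: XY_indep | exact: mS].
Qed.

End independent_pair.

Section tuple_fun.
Context dO (Omega : measurableType dO) dT (T : measurableType dT).

Definition tuple_fun n (X : 'I_n -> Omega -> T) (w : Omega) : n.-tuple T :=
  [tuple X i w | i < n].

Lemma measurable_tuple_fun n (X : 'I_n -> Omega -> T) :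
  (forall i, measurable_fun setT (X i)) -> measurable_fun setT (tuple_fun X).
Proof.
move=> mX; apply/measurable_fun_tnthP => i.
by rewrite (_ : _ \o _ = X i)//; apply/funext => w; rewrite /= tnth_mktuple.
Qed.

Lemma tuple_fun_cons n (X : 'I_n.+1 -> Omega -> T) :
  tuple_fun X = (fun u => cons_tuple u.1 u.2) \o
    (fun w => (X ord0 w, tuple_fun (fun j => X (lift ord0 j)) w)).
Proof.
apply/funext => w; apply: eq_from_tnth => i; rewrite /= tnth_mktuple.
by case: (unliftP ord0 i) => [j ->|->]; rewrite ?tnthS ?tnth_mktuple.
Qed.

Lemma tuple_fun_preimage_box n (X : 'I_n -> Omega -> T) (B : 'I_n -> set T) :
  tuple_fun X @^-1` (\bigcap_(i in [set: 'I_n]) ((fun u => tnth u i) @^-1` B i)) =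
  \bigcap_(i in [set: 'I_n]) (X i @^-1` B i).
Proof.
by apply/seteqP; split => w /= Xw i _; have /= := Xw i I; rewrite tnth_mktuple.
Qed.

End tuple_fun.

Section tuple_mfun.
Context dO (Omega : measurableType dO) dT (T : measurableType dT).
Variables (n : nat) (X : 'I_n -> {mfun Omega >-> T}).

HB.instance Definition _ := isMeasurableFun.Build _ _ _ _ (tuple_fun X)
  (measurable_tuple_fun (fun i => @measurable_funPT _ _ _ _ (X i))).

End tuple_mfun.

Definition boxes dT (T : measurableType dT) n : set (set (n.-tuple T)) :=
  [set \bigcap_(i in [set: 'I_n]) ((fun u => tnth u i) @^-1` B i) |
    B in [set B : 'I_n -> set T | forall i, measurable (B i)]].
Arguments boxes {dT} T n.

Section boxes.
Context dT (T : measurableType dT).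

Lemma measurable_boxes n : measurable = <<s boxes T n>>.
Proof.
apply/seteqP; split.
- apply: smallest_sub; first exact: smallest_sigma_algebra.
  case: n => [|n]; first by rewrite big_ord0.
  rewrite -bigcup_mkord_ord; apply: bigcup_sub => k _ _ [A mA <-].
  apply: sub_sigma_algebra.
  exists (fun j => if j == inord k then A else setT) => [j|].
    by case: ifP.
  apply/seteqP; split => u /=.
    by move=> uA; split=> //; have /= := uA (inord k) I; rewrite eqxx.
  by move=> [_ uA] j _; case: ifPn => [/eqP ->|].
- apply: smallest_sub; first exact: sigma_algebra_measurable.
  move=> _ [B mB <-]; apply: fin_bigcap_measurable; first exact: finite_finset.
  by move=> i _; rewrite -[X in measurable X]setTI; exact: measurable_tnth.
Qed.

Lemma boxes_setI_closed n : setI_closed (boxes T n).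
Proof.
move=> _ _ [B mB <-] [C mC <-]; exists (fun i => B i `&` C i).
  by move=> i; exact: measurableI.
by rewrite bigcapI.
Qed.

Lemma boxesT n : boxes T n setT.
Proof. by exists (fun=> setT) => //; apply/seteqP; split. Qed.

End boxes.

Lemma bigcap_ord_recl (T : Type) n (F : 'I_n.+1 -> set T) :
  \bigcap_(i in [set: 'I_n.+1]) F i =
  F ord0 `&` \bigcap_(j in [set: 'I_n]) F (lift ord0 j).
Proof.
apply/seteqP; split=> [w Fw|w [F0w Fw] i _]; first by split=> [|j _]; exact: Fw.
by case: (unliftP ord0 i) => [j ->|->//]; exact: Fw.
Qed.

Section mutual_independence.
Local Open Scope ereal_scope.
Context dO (Omega : measurableType dO) (R : realType) (P : probability Omega R).

Lemma mutually_independent_cons n (X : 'I_n.+1 -> Omega -> R) :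
  mutually_independent P X ->
  forall (A : set R) (B : 'I_n -> set R), measurable A -> (forall j, measurable (B j)) ->
  P (X ord0 @^-1` A `&` \bigcap_(j in [set: 'I_n]) (X (lift ord0 j) @^-1` B j)) =
  P (X ord0 @^-1` A) * \prod_(j < n) P (X (lift ord0 j) @^-1` B j).
Proof.
move=> indep A B mA mB.
pose C i := if unlift ord0 i is Some j then B j else A.
have mC i : measurable (C i) by rewrite /C; case: unlift.
have C0 : C ord0 = A by rewrite /C unlift_none.
have CE j : C (lift ord0 j) = B j by rewrite /C liftK.
have := indep C mC; rewrite bigcap_ord_recl big_ord_recl C0.
by under eq_bigcapr do rewrite CE; under eq_bigr do rewrite CE.
Qed.

Lemma mutually_independent_tail n (X : 'I_n.+1 -> Omega -> R) :
  mutually_independent P X -> mutually_independent P (fun j => X (lift ord0 j)).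
Proof.
move=> indep B mB; have := mutually_independent_cons indep measurableT mB.
by rewrite preimage_setT setTI probability_setT mul1e.
Qed.

Lemma independent_head_tail n (X : 'I_n.+1 -> {RV P >-> R}) :
  mutually_independent P (fun i => X i) ->
  forall (A : set R) (B : set (n.-tuple R)), measurable A -> measurable B ->
  P (X ord0 @^-1` A `&` tuple_fun (fun j => X (lift ord0 j)) @^-1` B) =
  P (X ord0 @^-1` A) * P (tuple_fun (fun j => X (lift ord0 j)) @^-1` B).
Proof.
move=> indep A B mA mB.
pose Y : {RV P >-> n.-tuple R} := tuple_fun (fun j => X (lift ord0 j)).
change (P (X ord0 @^-1` A `&` Y @^-1` B) = P (X ord0 @^-1` A) * P (Y @^-1` B)).
have mX0A : measurable (X ord0 @^-1` A) by exact: measurable_funPTI.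
have PA0 : (0 <= fine (P (X ord0 @^-1` A)))%R by rewrite fine_ge0.
pose mu := pushforward (mrestr P mX0A) Y.
pose nu := mscale (NngNum PA0) (distribution P Y).
have muE S : mu S = P (X ord0 @^-1` A `&` Y @^-1` S) by rewrite setIC.
have nuE S : nu S = P (X ord0 @^-1` A) * P (Y @^-1` S).
  by rewrite /nu /mscale /= fineK ?fin_num_measure.
rewrite -muE -nuE.
apply: (measure_unique (boxes R n) (fun=> setT)).
- exact: measurable_boxes.
- exact: boxes_setI_closed.
- by move=> _; exact: boxesT.
- by rewrite bigcup_const.
- move=> _ [C mC <-]; apply: eq_trans (muE _) (eq_trans _ (esym (nuE _))).
  rewrite !tuple_fun_preimage_box (mutually_independent_cons indep) //.
  by have /= <- := mutually_independent_tail indep mC.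
- move=> _; rewrite [ltLHS]muE; apply: le_lt_trans (probability_le1 _ _) (ltry _).
  by rewrite preimage_setT setIT.
- exact: mB.
Qed.

End mutual_independence.

Section tuple_distribution_le.
Local Open Scope ereal_scope.
Context dO (Omega : measurableType dO) (R : realType) (P : probability Omega R).

Lemma tuple_distribution_le n (X X' : 'I_n -> {RV P >-> R}) (c : 'I_n -> R) :
  (forall i, 0 <= c i)%R ->
  mutually_independent P (fun i => X i) -> mutually_independent P (fun i => X' i) ->
  (forall i A, measurable A -> P (X i @^-1` A) <= (c i)%:E * P (X' i @^-1` A)) ->
  forall S, measurable S ->
    P (tuple_fun (fun i => X i) @^-1` S) <=
    (\prod_i c i)%:E * P (tuple_fun (fun i => X' i) @^-1` S).
Proof.
elim: n X X' c => [|n IH] X X' c c0 indepX indepX' XX' S mS.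
  have -> : tuple_fun (fun i => X' i) = tuple_fun (fun i => X i).
    by apply/funext => w; rewrite [LHS]tuple0 [RHS]tuple0.
  by rewrite big_ord0 mul1e.
have mconsS : measurable ((fun u : R * n.-tuple R => cons_tuple u.1 u.2) @^-1` S).
  by rewrite -[X in measurable X]setTI; exact: measurable_cons.
rewrite !tuple_fun_cons !comp_preimage.
rewrite (distribution_pair_independent (independent_head_tail indepX)) //.
rewrite (distribution_pair_independent (independent_head_tail indepX')) //.
rewrite big_ord_recl; apply: product_measure_le => //.
- exact: prodr_ge0.
- exact: XX'.
- move=> B mB; apply: IH => //; last by move=> i; exact: XX'.
  + exact: (mutually_independent_tail indepX).
  + exact: (mutually_independent_tail indepX').
Qed.

End tuple_distribution_le.

Theorem theorem4 (R : realType) (T : Type) (d : T -> T -> R) (m : nat)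
  (p : \bar R) (dO : measure_display) (Omega : measurableType dO)
  (P : probability Omega R) (M : 'I_m -> T -> Omega -> R) (eps : 'I_m -> R) :
  is_metric d ->
  (1 <= p)%E ->
  (forall i, 0 <= eps i) ->
  (forall i (x : T), measurable_fun [set: Omega] (M i x)) ->
  (forall i, diff_private P d (M i) (eps i)) ->
  (forall x : m.-tuple T, mutually_independent P (fun i => M i (tnth x i))) ->
  diff_private P (lp_dist d p)
    (fun (x : m.-tuple T) (w : Omega) => [tuple M i (tnth x i) w | i < m])
    (lpnorm (conj_exp p) eps).
Proof.
move=> _ p1 _ mM dpM indep x x' D dist_le_D S mS.
pose RV (y : m.-tuple T) i : {RV P >-> R} := mfun_Sub (mem_set (mM i (tnth y i))).
pose dist i := d (tnth x i) (tnth x' i).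
have law_le := tuple_distribution_le (X := RV x) (X' := RV x')
  (fun i => expR_ge0 (dist i * eps i)) (indep x) (indep x')
  (fun i A mA => dpM i _ _ _ (le_refl _) A mA) mS.
apply: le_trans law_le _; apply: lee_wpmul2r; first exact: measure_ge0.
rewrite lee_fin -expR_sum ler_expR.
apply: le_trans (ler_wpM2r (lpnorm_ge0 _ _) dist_le_D).
apply: le_trans (hoelder_lpnorm _ _ p1).
by apply: ler_sum => i _; exact: ler_norm.
Qed.
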